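(* In the sleeping multi-armed bandit setting, assume the losses are i.i.d.: $(\ell_t)_{t\ge1}$ are i.i.d. random vectors in $[0,1]^K$ with mean vector $\mu=(\mu_1,\dots,\mu_K)$, and for each $t$, $\ell_t$ is independent of everything determined before the learner observes $\ell_t(k_t)$ at round $t$ (in particular of $S_1,\dots,S_t$, of $\ell_1,\dots,\ell_{t-1}$, of $k_1,\dots,k_t$). Let the availability sets $(S_t)$ be arbitrary, where $S_t$ may depend only on $(\ell_s)_{s\le t-1}$ (and past play). Then for any learner (algorithm) and any ordering $\sigma$ of $[K]$, $$\mathbb E\big[R_T^{\mathrm{ordering}}(\sigma)\big]\le\sum_{i=1}^K\sum_{j\in D_i}\mathbb E\big[R_T^{\mathrm{int}}(i\to j)\big],$$ where $D_i=\{j\in[K]:\mu_j\le\mu_i\}$.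
   Context: Sleeping multi-armed bandit setting: $K$ arms $[K]=\{1,\dots,K\}$. At each round $t$ a nonempty availability set $S_t\subseteq[K]$ is revealed, the learner (possibly randomized, using only $S_1,\dots,S_t$, previously observed losses $\ell_s(k_s)$, $s<t$, and internal randomness) selects $k_t\in S_t$ and observes $\ell_t(k_t)$, where $\ell_t\in[0,1]^K$. Internal sleeping regret: $R_T^{\mathrm{int}}(i\to j)=\sum_{t=1}^T\big(\ell_t(k_t)-\ell_t(j)\big)\mathbf 1\{k_t=i,\ j\in S_t\}$ (equal to $0$ when $i=j$). An ordering is a permutation $\sigma=(\sigma_1,\dots,\sigma_K)$ of $[K]$; for nonempty $S\subseteq[K]$, $\sigma(S)=\sigma_m$ where $m=\min\{i:\sigma_i\in S\}$. Ordering regret: $R_T^{\mathrm{ordering}}(\sigma)=\sum_{t=1}^T\big(\ell_t(k_t)-\ell_t(\sigma(S_t))\big)$. *)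

From HB Require Import structures.
From mathcomp Require Import all_boot all_order all_algebra all_fingroup.
From mathcomp Require Import all_classical all_reals all_analysis.
Set Implicit Arguments. Unset Strict Implicit. Unset Printing Implicit Defensive.
Import Order.TTheory GRing.Theory Num.Theory.
Local Open Scope classical_set_scope.
Local Open Scope ring_scope.

(* Arms are 'I_K (arm i of the paper is the ordinal i-1).  Rounds are t = 1, 2, ... *)

Definition ord_pick (K : nat) (sigma : {perm 'I_K}) (S : {set 'I_K}) : option 'I_K :=
  ohead [seq sigma i | i <- enum 'I_K & sigma i \in S].

Definition int_regret (R : realType) (Omega : Type) (K : nat)
  (ell : nat -> Omega -> 'I_K -> R) (S : nat -> Omega -> {set 'I_K})
  (k : nat -> Omega -> 'I_K) (T : nat) (i j : 'I_K) (w : Omega) : R :=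
  \sum_(1 <= t < T.+1)
     (ell t w (k t w) - ell t w j) * ((k t w == i) && (j \in S t w))%:R.

(* Ordering regret R_T^ordering(sigma) as a function of the outcome w
   (S t w is nonempty under the hypotheses, so the default 0 is never used). *)
Definition ordering_regret (R : realType) (Omega : Type) (K : nat)
  (ell : nat -> Omega -> 'I_K -> R) (S : nat -> Omega -> {set 'I_K})
  (k : nat -> Omega -> 'I_K) (T : nat) (sigma : {perm 'I_K}) (w : Omega) : R :=
  \sum_(1 <= t < T.+1)
     (ell t w (k t w) - oapp (ell t w) 0 (ord_pick sigma (S t w))).

Definition loss_in (R : realType) (Omega : Type) (K : nat)
  (ell : nat -> Omega -> 'I_K -> R) (t : nat) (B : 'I_K -> set R) : set Omega :=
  [set w | forall j, B j (ell t w j)].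

(* Generators of the information available to the learner when choosing k_t:
   its internal randomness (events in F0), the availability sets S_1..S_t, and
   the observed losses l_s(k_s), s < t. *)
Definition learner_info (R : realType) (Omega : Type) (K : nat)
  (ell : nat -> Omega -> 'I_K -> R) (S : nat -> Omega -> {set 'I_K})
  (k : nat -> Omega -> 'I_K) (F0 : set (set Omega)) (t : nat)
  (measR : set R -> Prop) : set (set Omega) :=
  F0
  `|` [set E | exists s A, (1 <= s <= t)%N /\ E = [set w | S s w = A]]
  `|` [set E | exists s B, (1 <= s < t)%N /\ measR B /\
                     E = [set w | B (ell s w (k s w))]].

From HB Require Import structures.
From mathcomp Require Import all_boot all_order all_algebra all_fingroup.
From mathcomp Require Import all_classical all_reals all_analysis.
From mathcomp Require Import measurable_realfun.
Set Implicit Arguments. Unset Strict Implicit. Unset Printing Implicit Defensive.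
Import Order.TTheory GRing.Theory Num.Theory.
Local Open Scope classical_set_scope.
Local Open Scope ring_scope.

(* Write the round-t term of each regret as a sum of terms 1_E (l_t(i) - l_t(j))
   over events E determined by (S_t, k_t):
     ordering regret:  E = {k_t = i, sigma(S_t) = j},  summed over all pairs (i, j);
     internal regret:  E = {k_t = i, j \in S_t}.
   Such events lie in F_t, hence are independent of l_t, so by the tail formula
   for expectations  E[1_E (l_t(i) - l_t(j))] = P(E) (mu_i - mu_j).  In the
   ordering regret, pairs with mu_j > mu_i contribute nonpositively and are
   dropped; for the others {k_t = i, sigma(S_t) = j} is contained in
   {k_t = i, j \in S_t}, which gives the bound term by term. *)

Section sigma_algebra_closure.
Variables (T : Type) (G : set (set T)).
Hypothesis sigmaG : sigma_algebra setT G.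

Lemma sigma_setC (A : set T) : G A -> G (~` A).
Proof. by case: sigmaG => _ GD _ /GD; rewrite setTD. Qed.

Lemma sigma_setI (A B : set T) : G A -> G B -> G (A `&` B).
Proof.
by have [_ _ _ GI] := (sigma_algebraP (fun _ _ => @subsetT _ _)).1 sigmaG; apply: GI.
Qed.

Lemma sigma_setU (A B : set T) : G A -> G B -> G (A `|` B).
Proof.
move=> GA GB; rewrite -[_ `|` _]setCK setCU.
by apply/sigma_setC/sigma_setI; apply: sigma_setC.
Qed.

Lemma sigma_finite_preimage (U : finType) (g : T -> U) (p : pred U) :
  (forall x, G [set w | g w = x]) -> G [set w | p (g w)].
Proof.
move=> Gg; have [G0 _ _] := sigmaG.
have GF : fin_bigcup_closed G by apply/fin_bigcup_closedP; split => //; exact: sigma_setU.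
rewrite (_ : [set w | p (g w)] = \bigcup_(x in [set x | p x]) [set w | g w = x]).
  by apply: GF => //; exact: finite_finset.
by apply/seteqP; split => w /=; [exists (g w) | case=> x /= px ->].
Qed.
End sigma_algebra_closure.

Section expectation_tools.
Variables (R : realType) (d : measure_display) (Omega : measurableType d)
  (P : probability Omega R).

Lemma bounded_Lfun1 (f : Omega -> R) (M : R) :
  measurable_fun setT f -> (forall w, `|f w| <= M) -> f \in Lfun P 1.
Proof.
move=> mf fM; apply/Lfun1_integrable.
apply: (@le_integrable _ _ _ P _ measurableT _ (EFin \o cst M)).
- exact/measurable_EFinP.
- by move=> w _ /=; rewrite lee_fin (le_trans (fM w)) // ler_norm.
- exact: finite_measure_integrable_cst.
Qed.

Lemma Lfun1_big (I : Type) (r : seq I) (f : I -> Omega -> R) :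
  (forall i, f i \in Lfun P 1) -> (fun w => \sum_(i <- r) f i w) \in Lfun P 1.
Proof. by move=> fL; rewrite -fct_sumE; apply: rpred_sum. Qed.

Lemma expectation_big (I : eqType) (r : seq I) (f : I -> Omega -> R) :
  (forall i, i \in r -> f i \in Lfun P 1) ->
  ('E_P[fun w => (\sum_(i <- r) f i w)%R] = \sum_(i <- r) 'E_P[f i])%E.
Proof.
move=> fL; rewrite -fct_sumE -(big_map f xpredT id) expectation_sum ?big_map //.
by move=> _ /mapP[i ir ->]; exact: fL.
Qed.
End expectation_tools.

Section event_expectation.
Variables (R : realType) (d : measure_display) (Omega : measurableType d)
  (P : probability Omega R).

Lemma measurable_fun_bool (q : Omega -> bool) : measurable [set w | q w] ->
  measurable_fun setT (fun w => ((q w)%:R : R)).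
Proof.
move=> mq; rewrite (_ : (fun w => _) = \1_[set w | q w]); first exact: measurable_indic.
apply/funext => w; rewrite indicE.
by case: (boolP (q w)) => qw; [rewrite mem_set | rewrite memNset /= ?(negbTE qw)].
Qed.

(* Both sides are computed with the tail formula E[Y] = int_0^oo P(Y > r) dr. *)
Lemma expectation_event_mul (q : Omega -> bool) (X X' : Omega -> R) :
  measurable [set w | q w] -> measurable_fun setT X -> measurable_fun setT X' ->
  (forall w, 0 <= X w) -> (forall w, 0 <= X' w) ->
  (forall r, 0 <= r -> P ([set w | q w] `&` X @^-1` `]r, +oo[) =
                         (P [set w | q w] * P (X' @^-1` `]r, +oo[))%E) ->
  ('E_P[fun w => ((q w)%:R * X w)%R] = P [set w | q w] * 'E_P[X'])%E.
Proof.
set A := [set w | q w] => mA mX mX' X0 X'0 indep.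
have qX0 w : 0 <= (q w)%:R * X w by rewrite mulr_ge0.
have mqX : measurable_fun setT (fun w => (q w)%:R * X w).
  exact: measurable_funM (measurable_fun_bool mA) mX.
have qXm : (fun w => (q w)%:R * X w) \in mfun by rewrite inE.
have X'm : X' \in mfun by rewrite inE.
pose Y : {RV P >-> R} := mfun_Sub qXm.
pose Y' : {RV P >-> R} := mfun_Sub X'm.
rewrite [LHS](ge0_expectation_ccdf (X := Y)) // [in RHS](ge0_expectation_ccdf (X := Y')) //.
rewrite -ge0_integralZl //; last exact: measurable_funS (ccdf_measurable _).
apply: eq_integral => r; rewrite inE /= in_itv /= andbT => r0.
rewrite /ccdf /distribution /= /pushforward -indep //; congr (P _).
apply/seteqP; split => w /=; rewrite /A /= !in_itv /= !andbT.
  by case: (q w); rewrite ?mul1r ?mul0r // ltNge r0.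
by case=> -> /=; rewrite mul1r.
Qed.
End event_expectation.

Section ordering_choice.
Variables (K : nat) (sigma : {perm 'I_K}).

Lemma ord_pick_mem (A : {set 'I_K}) (j : 'I_K) : ord_pick sigma A = Some j -> j \in A.
Proof.
rewrite /ord_pick; case E: [seq _ | _ <- _ & _] => [|a s] //= [<-].
have : a \in [seq sigma i | i <- enum 'I_K & sigma i \in A] by rewrite E mem_head.
by case/mapP => i; rewrite mem_filter => /andP[+ _] ->.
Qed.

Lemma ord_pick_exists (A : {set 'I_K}) (x : 'I_K) :
  x \in A -> exists j, ord_pick sigma A = Some j.
Proof.
move=> xA; rewrite /ord_pick; case E: [seq _ | _ <- _ & _] => [|a s] /=; last by exists a.
have : x \in [seq sigma i | i <- enum 'I_K & sigma i \in A].
  apply/mapP; exists (sigma^-1 x)%g; last by rewrite permKV.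
  by rewrite mem_filter permKV xA mem_enum.
by rewrite E.
Qed.
End ordering_choice.

Lemma sum_pair_delta (R : pzSemiRingType) (I J : finType) (a : I) (b : J) (h : I * J -> R) :
  \sum_(x : I * J) ((a == x.1) && (b == x.2))%:R * h x = h (a, b).
Proof.
rewrite (bigD1 (a, b)) //= !eqxx mul1r big1 ?addr0 // => -[i j] /= nij.
rewrite (_ : (_ && _) = false) ?mul0r //; apply: contraNF nij.
by case/andP => /eqP <- /eqP <-.
Qed.

(* The bandit with i.i.d. losses: F t is the information available before the
   observation of round t, the losses of round t are independent of F t and
   distributed as those of round 1, whose means are mu. *)
Section iid_losses.
Variables (R : realType) (d : measure_display) (Omega : measurableType d)
  (P : probability Omega R) (K : nat)
  (ell : nat -> Omega -> 'I_K -> R) (S : nat -> Omega -> {set 'I_K})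
  (k : nat -> Omega -> 'I_K) (mu : 'I_K -> R) (F : nat -> set (set Omega)).
Hypotheses (HFsig : forall t, sigma_algebra setT (F t))
  (HFmeas : forall t, F t `<=` measurable)
  (Hl01 : forall t w j, 0 <= ell t w j <= 1)
  (Hlad : forall t j (B : set R), (1 <= t)%N -> measurable B ->
            F t.+1 [set w | B (ell t w j)])
  (HSad : forall t (A : {set 'I_K}), (1 <= t)%N -> F t [set w | S t w = A])
  (Hkad : forall t (i : 'I_K), (1 <= t)%N -> F t [set w | k t w = i])
  (Hindep : forall t (A : set Omega) (B : 'I_K -> set R), (1 <= t)%N ->
     F t A -> (forall j, measurable (B j)) ->
     P (A `&` loss_in ell t B) = (P A * P (loss_in ell t B))%E)
  (Hident : forall t (B : 'I_K -> set R), (1 <= t)%N ->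
     (forall j, measurable (B j)) ->
     P (loss_in ell t B) = P (loss_in ell 1 B))
  (Hmean : forall j, ('E_P[fun w => ell 1%N w j] = (mu j)%:E)%E).

Lemma adapted_event t (p : {set 'I_K} -> 'I_K -> bool) : (1 <= t)%N ->
  F t [set w | p (S t w) (k t w)].
Proof.
move=> t1; apply: (@sigma_finite_preimage _ _ (HFsig t) _
  (fun w => (S t w, k t w)) (fun x => p x.1 x.2)) => -[A i].
rewrite (_ : [set w | _ = _] = [set w | S t w = A] `&` [set w | k t w = i]).
  by apply: sigma_setI; [exact: HFsig | exact: HSad | exact: Hkad].
by apply/seteqP; split => w /=; [case=> -> -> | case=> -> ->].
Qed.

Lemma measurable_loss t j : (1 <= t)%N -> measurable_fun setT (fun w => ell t w j).
Proof. by move=> t1 _ B mB; rewrite setTI; apply: HFmeas; exact: Hlad. Qed.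

Lemma loss_indep t j (A : set Omega) (B : set R) : (1 <= t)%N -> F t A -> measurable B ->
  P (A `&` (fun w => ell t w j) @^-1` B) =
  (P A * P ((fun w => ell 1%N w j) @^-1` B))%E.
Proof.
move=> t1 FA mB; pose Bj j' := if j' == j then B else setT.
have mBj j' : measurable (Bj j') by rewrite /Bj; case: eqP.
have loss_inE t' : loss_in ell t' Bj = (fun w => ell t' w j) @^-1` B.
  apply/seteqP; split => w /=; first by move/(_ j); rewrite /Bj eqxx.
  by move=> Bw j'; rewrite /Bj; case: eqP => [->|].
by rewrite -!loss_inE Hindep // Hident.
Qed.

Lemma Lfun1_event_loss t (q : Omega -> bool) j : (1 <= t)%N -> F t [set w | q w] ->
  (fun w => (q w)%:R * ell t w j) \in Lfun P 1.
Proof.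
move=> t1 Fq; apply: (@bounded_Lfun1 _ _ _ _ _ 1).
  exact: measurable_funM (measurable_fun_bool (HFmeas Fq)) (measurable_loss j t1).
move=> w; have /andP[l0 l1] := Hl01 t w j.
by case: (q w); rewrite ?mul1r ?mul0r ?normr0 ?ger0_norm.
Qed.

Lemma Lfun1_event_gap t (q : Omega -> bool) i j : (1 <= t)%N -> F t [set w | q w] ->
  (fun w => (q w)%:R * (ell t w i - ell t w j)) \in Lfun P 1.
Proof.
move=> t1 Fq; rewrite (_ : (fun w => _) = (fun w => (q w)%:R * ell t w i) \-
  (fun w => (q w)%:R * ell t w j)); last by apply/funext => w /=; rewrite mulrBr.
by apply: rpredB; apply: Lfun1_event_loss.
Qed.

Lemma expectation_event_loss t (q : Omega -> bool) j : (1 <= t)%N -> F t [set w | q w] ->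
  ('E_P[fun w => ((q w)%:R * ell t w j)%R] = P [set w | q w] * (mu j)%:E)%E.
Proof.
move=> t1 Fq; rewrite -Hmean; apply: expectation_event_mul.
- exact: HFmeas Fq.
- exact: measurable_loss.
- exact: measurable_loss.
- by move=> w; have /andP[] := Hl01 t w j.
- by move=> w; have /andP[] := Hl01 1%N w j.
- by move=> r _; apply: loss_indep.
Qed.

Lemma expectation_event_gap t (q : Omega -> bool) i j : (1 <= t)%N -> F t [set w | q w] ->
  ('E_P[fun w => ((q w)%:R * (ell t w i - ell t w j))%R] =
   (fine (P [set w | q w]) * (mu i - mu j))%:E)%E.
Proof.
move=> t1 Fq; rewrite (_ : (fun w => _) = (fun w => (q w)%:R * ell t w i) \-
  (fun w => (q w)%:R * ell t w j)); last by apply/funext => w /=; rewrite mulrBr.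
rewrite expectationB ?Lfun1_event_loss // !expectation_event_loss //.
by rewrite -(fineK (fin_num_measure P _ (HFmeas Fq))) -!EFinM -EFinB mulrBr.
Qed.

Lemma expectation_regret_sum (I : eqType) (r : seq I) (a b : I -> 'I_K)
    (q : nat -> I -> Omega -> bool) (T : nat) :
  (forall t x, (1 <= t)%N -> F t [set w | q t x w]) ->
  ('E_P[fun w => (\sum_(1 <= t < T.+1) \sum_(x <- r)
       (q t x w)%:R * (ell t w (a x) - ell t w (b x)))%R] =
   (\sum_(1 <= t < T.+1) \sum_(x <- r)
       fine (P [set w | q t x w]) * (mu (a x) - mu (b x)))%:E)%E.
Proof.
move=> Fq; have Lgap t x : (1 <= t)%N ->
    (fun w => (q t x w)%:R * (ell t w (a x) - ell t w (b x))) \in Lfun P 1.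
  by move=> t1; apply: Lfun1_event_gap => //; exact: Fq.
rewrite expectation_big => [|t]; last first.
  by rewrite mem_index_iota => /andP[t1 _]; apply: Lfun1_big => x; exact: Lgap.
rewrite -sumEFin; apply: eq_big_seq => t; rewrite mem_index_iota => /andP[t1 _].
rewrite expectation_big -?sumEFin => [|x _]; last exact: Lgap.
by apply: eq_bigr => x _; apply: expectation_event_gap => //; exact: Fq.
Qed.
End iid_losses.

(* The final comparison of sums: terms with mu_j > mu_i are nonpositive and
   the remaining weights are dominated (t ranges over a list of rounds). *)
Lemma weighted_gap_sum_le (R : realDomainType) (I : finType) (J : eqType)
    (s : seq J) (mu : I -> R) (pA pB : J -> I * I -> R) :
  (forall t x, t \in s -> 0 <= pA t x) ->
  (forall t x, t \in s -> mu x.2 <= mu x.1 -> pA t x <= pB t x) ->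
  \sum_(t <- s) \sum_(x : I * I) pA t x * (mu x.1 - mu x.2) <=
  \sum_(i : I) \sum_(j : I | mu j <= mu i) \sum_(t <- s) pB t (i, j) * (mu i - mu j).
Proof.
move=> pA0 pAB.
rewrite [leLHS](_ : _ = \sum_i \sum_j \sum_(t <- s) pA t (i, j) * (mu i - mu j));
  last by rewrite exchange_big pair_big; apply: eq_bigr => -[].
rewrite ler_sum // => i _.
rewrite (bigID (fun j => mu j <= mu i)) /= -[leRHS]addr0 lerD //.
  rewrite ler_sum // => j ji; rewrite big_seq [leRHS]big_seq ler_sum // => t ts.
  by rewrite ler_wpM2r ?subr_ge0 // pAB.
rewrite sumr_le0 // => j; rewrite -ltNge => ij; rewrite big_seq sumr_le0 // => t ts.
by rewrite mulr_ge0_le0 ?pA0 // subr_le0 ltW.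
Qed.

Section regret_decomposition.
Variables (R : realType) (Omega : Type) (K : nat) (ell : nat -> Omega -> 'I_K -> R)
  (S : nat -> Omega -> {set 'I_K}) (k : nat -> Omega -> 'I_K) (T : nat).

Lemma ordering_regret_events (sigma : {perm 'I_K}) :
  (forall t w, (1 <= t)%N -> k t w \in S t w) ->
  ordering_regret ell S k T sigma = fun w => \sum_(1 <= t < T.+1) \sum_(x : 'I_K * 'I_K)
    ((k t w == x.1) && (ord_pick sigma (S t w) == Some x.2))%:R *
    (ell t w x.1 - ell t w x.2).
Proof.
move=> HkS; apply/funext => w; apply: eq_big_nat => t /andP[t1 _].
have [j pickj] := ord_pick_exists sigma (HkS t w t1).
rewrite pickj -(sum_pair_delta (k t w) j (fun x => ell t w x.1 - ell t w x.2)).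
by apply: eq_bigr => x _.
Qed.

Lemma int_regret_events (i j : 'I_K) :
  int_regret ell S k T i j = fun w => \sum_(1 <= t < T.+1) \sum_(x <- [:: (i, j)])
    ((k t w == x.1) && (x.2 \in S t w))%:R * (ell t w x.1 - ell t w x.2).
Proof.
apply/funext => w; apply: eq_bigr => t _; rewrite big_seq1 /= mulrC.
by case: eqVneq => [->|]; rewrite ?mul0r.
Qed.
End regret_decomposition.

Theorem lemma2 (R : realType) (d : measure_display) (Omega : measurableType d)
  (P : probability Omega R) (K : nat)
  (ell : nat -> Omega -> 'I_K -> R) (S : nat -> Omega -> {set 'I_K})
  (k : nat -> Omega -> 'I_K) (mu : 'I_K -> R)
  (F : nat -> set (set Omega)) (F0 : set (set Omega))
  (* F t = events determined before the learner observes l_t(k_t) at round t *)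
  (HFsig : forall t, sigma_algebra setT (F t))
  (HFmeas : forall t, F t `<=` measurable)
  (HFmono : forall t, F t `<=` F t.+1)
  (* losses in [0,1]; l_t is determined before round t+1 *)
  (Hl01 : forall t w j, 0 <= ell t w j <= 1)
  (Hlad : forall t j (B : set R), (1 <= t)%N -> measurable B ->
            F t.+1 [set w | B (ell t w j)])
  (* S_t and k_t are determined before the observation of round t *)
  (HSad : forall t (A : {set 'I_K}), (1 <= t)%N -> F t [set w | S t w = A])
  (Hkad : forall t (i : 'I_K), (1 <= t)%N -> F t [set w | k t w = i])
  (* the learner picks an available arm *)
  (HkS : forall t w, (1 <= t)%N -> k t w \in S t w)
  (* the learner only uses its internal randomness F0, S_1..S_t and the
     observed losses l_s(k_s), s < t *)
  (HF0 : F0 `<=` F 1)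
  (Hlearner : forall t (i : 'I_K), (1 <= t)%N ->
     <<s learner_info ell S k F0 t measurable >> [set w | k t w = i])
  (* l_t is independent of everything determined before round t's observation *)
  (Hindep : forall t (A : set Omega) (B : 'I_K -> set R), (1 <= t)%N ->
     F t A -> (forall j, measurable (B j)) ->
     P (A `&` loss_in ell t B) = (P A * P (loss_in ell t B))%E)
  (* the l_t are identically distributed *)
  (Hident : forall t (B : 'I_K -> set R), (1 <= t)%N ->
     (forall j, measurable (B j)) ->
     P (loss_in ell t B) = P (loss_in ell 1 B))
  (* with mean vector mu *)
  (Hmean : forall j, ('E_P[fun w => ell 1%N w j] = (mu j)%:E)%E)
  (T : nat) (sigma : {perm 'I_K}) :
  ('E_P[ordering_regret ell S k T sigma]
    <= \sum_(i < K) \sum_(j < K | (mu j <= mu i)%R) 'E_P[int_regret ell S k T i j])%E.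
Proof.
pose qA t (x : 'I_K * 'I_K) w := (k t w == x.1) && (ord_pick sigma (S t w) == Some x.2).
pose qB t (x : 'I_K * 'I_K) w := (k t w == x.1) && (x.2 \in S t w).
have adapted := adapted_event HFsig HSad Hkad.
have FA t x : (1 <= t)%N -> F t [set w | qA t x w].
  exact: adapted (fun A i => (i == x.1) && (ord_pick sigma A == Some x.2)).
have FB t x : (1 <= t)%N -> F t [set w | qB t x w].
  exact: adapted (fun A i => (i == x.1) && (x.2 \in A)).
have Eregret := expectation_regret_sum HFmeas Hl01 Hlad Hindep Hident Hmean.
under eq_bigr => i _ do under eq_bigr => j _ do
  rewrite int_regret_events (Eregret _ _ _ _ qB) //.
under eq_bigr => i _ do rewrite sumEFin.
rewrite sumEFin.
under eq_bigr => i _ do under eq_bigr => j _ do under eq_bigr => t _ do rewrite big_seq1.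
rewrite ordering_regret_events // (Eregret _ _ _ _ qA) // lee_fin /=.
apply: (@weighted_gap_sum_le _ _ _ _ _ (fun t x => fine (P [set w | qA t x w]))
                            (fun t x => fine (P [set w | qB t x w]))) => t x.
  by move=> _; exact/fine_ge0/measure_ge0.
(* {k_t = i, sigma(S_t) = j} is contained in {k_t = i, j \in S_t}. *)
rewrite mem_index_iota => /andP[t1 _] _.
have [mA mB] := (HFmeas _ _ (FA t x t1), HFmeas _ _ (FB t x t1)).
apply: fine_le; rewrite ?fin_num_measure //.
apply: le_measure; rewrite ?inE // => w /andP[kx /eqP pick].
by rewrite /qB /= kx (ord_pick_mem pick).
Qed.
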